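(* Let $q$ be a prime power and $n\ge2$. For $1\le d\le\lfloor n/2\rfloor$ let $\mathcal{M}_{q,d}$ be the largest size of a $d$-intersecting family in $\mathbb{G}_q(n,2d)$, and let $\mathcal{M}_q=\max_{1\le d\le\lfloor n/2\rfloor}\mathcal{M}_{q,d}$. If $\mathcal{U}\subseteq\mathbb{P}_q(n)$ is an equidistant linear code with constant distance $2d$, then $|\mathcal{U}|\le 2^{\lfloor\log_2(\mathcal{M}_{q,d}+1)\rfloor}$. In general, every equidistant linear code $\mathcal{U}\subseteq\mathbb{P}_q(n)$ satisfies $|\mathcal{U}|\le 2^{\lfloor\log_2(\mathcal{M}_q+1)\rfloor}$.
   Context: $\mathbb{P}_q(n)$ denotes the set of all subspaces of $\mathbb{F}_q^n$ and $\mathbb{G}_q(n,k)$ the set of $k$-dimensional subspaces. For subspaces $X,Y$ the subspace distance is $d_S(X,Y)=\dim X+\dim Y-2\dim(X\cap Y)$. A linear code in $\mathbb{P}_q(n)$ is a subset $\mathcal{U}\subseteq\mathbb{P}_q(n)$ with $\{0\}\in\mathcal{U}$ for which there exists a map $\boxplus:\mathcal{U}\times\mathcal{U}\to\mathcal{U}$ such that (i) $(\mathcal{U},\boxplus)$ is an abelian group; (ii) its identity element is $\{0\}$; (iii) $X\boxplus X=\{0\}$ for all $X\in\mathcal{U}$; (iv) $d_S(Y_1\boxplus X,Y_2\boxplus X)=d_S(Y_1,Y_2)$ for all $Y_1,Y_2,X\in\mathcal{U}$. It is equidistant with constant distance $r$ if $d_S(X,Y)=r$ for all distinct $X,Y\in\mathcal{U}$.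 A family $\mathcal{F}$ of subspaces is $\lambda$-intersecting if $\dim(X\cap Y)=\lambda$ for all distinct $X,Y\in\mathcal{F}$. *)

From HB Require Import structures.
From mathcomp Require Import all_boot all_order all_algebra all_field.
Set Implicit Arguments. Unset Strict Implicit. Unset Printing Implicit Defensive.
Import VectorInternalTheory.

HB.instance Definition _ (F : finFieldType) (vT : vectType F) :=
  [Finite of {vspace vT} by <:].

(* P_q(n): the subspaces of F^n, where F is a finite field with q elements. *)
Definition subsp (F : finFieldType) (n : nat) := {vspace 'rV[F]_n}.

Section Defs.
Variables (F : finFieldType) (n : nat).
Local Notation S := (subsp F n).

Definition dS (X Y : S) : nat := (\dim X + \dim Y - 2 * \dim (X :&: Y))%N.

Definition grass (k : nat) : {set S} := [set X : S | \dim X == k].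

Definition linear_code (U : {set S}) : Prop :=
  (0%VS : S) \in U /\
  exists op : S -> S -> S,
    (forall X Y, X \in U -> Y \in U -> op X Y \in U) /\
    (forall X Y Z, X \in U -> Y \in U -> Z \in U ->
       op X (op Y Z) = op (op X Y) Z) /\
    (forall X Y, X \in U -> Y \in U -> op X Y = op Y X) /\
    (forall X, X \in U -> op 0%VS X = X /\ op X 0%VS = X) /\
    (forall X, X \in U -> exists Y, Y \in U /\ op X Y = 0%VS /\ op Y X = 0%VS) /\
    (forall X, X \in U -> op X X = 0%VS) /\
    (forall Y1 Y2 X, Y1 \in U -> Y2 \in U -> X \in U ->
       dS (op Y1 X) (op Y2 X) = dS Y1 Y2).

Definition equidistant (U : {set S}) (r : nat) : Prop :=
  forall X Y, X \in U -> Y \in U -> X != Y -> dS X Y = r.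

Definition intersecting (Fam : {set S}) (lam : nat) : bool :=
  [forall X in Fam, forall Y in Fam, (X != Y) ==> (\dim (X :&: Y) == lam)].

Definition Mqd (d : nat) : nat :=
  \max_(Fam : {set S} | (Fam \subset grass (2 * d)) && intersecting Fam d) #|Fam|.

Definition Mq : nat := \max_(d < n./2.+1 | (0 < d)%N) Mqd d.
End Defs.

From HB Require Import structures.
From mathcomp Require Import all_boot all_order all_algebra all_field.
From mathcomp Require Import zify.

Set Implicit Arguments.
Unset Strict Implicit.
Unset Printing Implicit Defensive.

(* A linear code is an elementary abelian 2-group, so its size is a power of
   two: starting from {0}, any closed subset S can be doubled to S ∪ (S ⊞ a)
   for a ∉ S.  Removing {0} from an equidistant code of distance 2d leaves a
   d-intersecting family in G_q(n,2d), so |U| <= M_{q,d} + 1, and a power of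
   two below M + 1 is at most 2^⌊log2 (M + 1)⌋.  An arbitrary equidistant code
   with at least two nonzero words has even distance 2 dim (X ∩ Y). *)

Section ExponentTwoGroup.
Variables (T : finType) (U : {set T}) (e : T) (op : T -> T -> T).
Hypotheses (U_e : e \in U)
  (op_closedU : {in U &, forall x y, op x y \in U})
  (opA : {in U & &, associative op})
  (opC : {in U &, commutative op})
  (op0x : {in U, forall x, op e x = x})
  (opxx : {in U, forall x, op x x = e}).

Definition op_closed (S : {set T}) := {in S &, forall x y, op x y \in S}.

Definition op_coset (S : {set T}) (a : T) := [set op x a | x in S].

Lemma opK a : a \in U -> {in U, forall x, op (op x a) a = x}.
Proof. by move=> aU x xU; rewrite -opA // opxx // opC ?op0x. Qed.

Section Doubling.
Variables (S : {set T}) (a : T).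
Hypotheses (sSU : S \subset U) (clS : op_closed S) (aU : a \in U) (aS : a \notin S).

Let SU x : x \in S -> x \in U := subsetP sSU x.

Lemma card_op_coset : #|op_coset S a| = #|S|.
Proof.
apply: card_in_imset => x y xS yS eq_xy.
by rewrite -(opK aU (SU xS)) eq_xy opK // SU.
Qed.

Lemma disjoint_op_coset : [disjoint S & op_coset S a].
Proof.
apply/pred0P => y /=; apply/negbTE/negP => /andP [yS /imsetP [x xS def_y]].
suff: a \in S by rewrite (negbTE aS).
have xU := SU xS.
by rewrite (_ : a = op x y) ?clS // def_y opA // opxx // op0x.
Qed.

Lemma op_coset_sub : S :|: op_coset S a \subset U.
Proof.
apply/subsetP => z /setUP [/SU // | /imsetP [x xS ->]].
exact: op_closedU (SU xS) aU.
Qed.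

Lemma op_closed_double : op_closed (S :|: op_coset S a).
Proof.
have cosetP x : x \in S -> op x a \in S :|: op_coset S a.
  by move=> xS; apply/setUP; right; apply: imset_f.
move=> x y /setUP [xS | /imsetP [x' x'S ->]] /setUP [yS | /imsetP [y' y'S ->]].
- by apply/setUP; left; apply: clS.
- have [xU y'U] := (SU xS, SU y'S).
  rewrite opA //; exact: cosetP (clS xS y'S).
- have [x'U yU] := (SU x'S, SU yS).
  rewrite opC ?op_closedU // opA //; exact: cosetP (clS yS x'S).
- have [x'U y'U] := (SU x'S, SU y'S).
  rewrite -opA ?op_closedU // [op a _]opC ?op_closedU // opK //.
  by apply/setUP; left; apply: clS.
Qed.

Lemma card_double : #|S :|: op_coset S a| = (2 * #|S|)%N.
Proof.
by rewrite cardsU (disjoint_setI0 disjoint_op_coset) cards0 subn0 card_op_coset mul2n addnn.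
Qed.

End Doubling.

Lemma card_pow2_of_closed_subset (S : {set T}) :
  S \subset U -> op_closed S -> (exists j, #|S| = 2 ^ j) -> exists k, #|U| = 2 ^ k.
Proof.
have [m] := ubnP (#|U| - #|S|); elim: m S => // m IH S lt_m sSU clS [j cardS].
have [sUS | /subsetPn [a aU aS]] := boolP (U \subset S).
  by exists j; rewrite -cardS (_ : U = S) //; apply/eqP; rewrite eqEsubset sUS sSU.
apply: (IH (S :|: op_coset S a)).
- have := subset_leq_card (op_coset_sub sSU aU).
  have : (0 < #|S|)%N by rewrite cardS expn_gt0.
  rewrite card_double //; lia.
- exact: op_coset_sub.
- exact: op_closed_double.
- by exists j.+1; rewrite card_double // cardS expnS.
Qed.

Lemma card_exponent2_group : exists k, #|U| = 2 ^ k.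
Proof.
apply: (@card_pow2_of_closed_subset [set e]); first by rewrite sub1set.
- by move=> x y /set1P -> /set1P ->; rewrite opxx // set11.
- by exists 0%N; rewrite cards1.
Qed.

End ExponentTwoGroup.

Lemma pow2_le_trunc_log k M : (2 ^ k <= M + 1)%N ->
  (2 ^ k <= 2 ^ trunc_log 2 (M + 1))%N.
Proof. by move=> le_kM; rewrite leq_exp2l // trunc_log_max. Qed.

Section SubspaceCodes.
Variables (F : finFieldType) (n : nat).
Local Notation S := (subsp F n).

Lemma linear_code_card_pow2 (U : {set S}) :
  linear_code U -> exists k, #|U| = 2 ^ k.
Proof.
move=> [U0 [op [clU [opA [opC [opid [_ [opxx _]]]]]]]].
by apply: (card_exponent2_group U0 clU opA opC _ opxx) => X /opid [].
Qed.

Lemma dS0v (X : S) : dS 0%VS X = \dim X.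
Proof. by rewrite /dS cap0v dimv0 muln0 subn0. Qed.

Lemma dim_subsp_le (X : S) : (\dim X <= n)%N.
Proof. by have := dimvS (subvf X); rewrite dimvf dim_matrix GRing.mul1r. Qed.

Lemma exists_subsp_dim k : (k <= n)%N -> exists X : S, \dim X = k.
Proof.
move=> le_kn; set B := vbasis (fullv : S).
have freeB : free (take k B).
  by apply: (@catl_free _ _ (drop k B)); rewrite cat_take_drop (basis_free (vbasisP _)).
exists <<take k B>>%VS; rewrite (eqP freeB) size_take size_tuple dimvf dim_matrix GRing.mul1r.
by case: ltnP => // le_nk; apply/eqP; rewrite eqn_leq le_kn le_nk.
Qed.

Lemma equidistant_dim (U : {set S}) r X :
  (0%VS : S) \in U -> equidistant U r -> X \in U :\ 0%VS -> \dim X = r.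
Proof. by move=> U0 eqU /setD1P [X0 XU]; rewrite -dS0v eqU // eq_sym. Qed.

Lemma equidistant_dist_cap (U : {set S}) r X Y :
  (0%VS : S) \in U -> equidistant U r ->
  X \in U :\ 0%VS -> Y \in U :\ 0%VS -> X != Y -> r = (2 * \dim (X :&: Y))%N.
Proof.
move=> U0 eqU XU' YU' neXY.
have [dX dY] := (equidistant_dim U0 eqU XU', equidistant_dim U0 eqU YU').
have le_cap : (\dim (X :&: Y) <= \dim X)%N by rewrite dimvS ?capvSl.
move: XU' YU' => /setD1P [_ XU] /setD1P [_ YU].
by move: (eqU X Y XU YU neXY) le_cap; rewrite /dS dX dY; lia.
Qed.

Lemma card_le_Mqd (Fam : {set S}) d :
  Fam \subset grass F n (2 * d) -> intersecting Fam d -> (#|Fam| <= Mqd F n d)%N.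
Proof.
move=> sub_grass intFam.
by apply: (leq_bigmax_cond (F := fun A : {set S} => #|A|)); rewrite sub_grass.
Qed.

Lemma Mqd_le_Mq d : (1 <= d <= n./2)%N -> (Mqd F n d <= Mq F n)%N.
Proof.
case/andP=> d_gt0 le_d; rewrite -ltnS in le_d.
exact: (leq_bigmax_cond (F := fun i : 'I_n./2.+1 => Mqd F n i) (Ordinal le_d)).
Qed.

Lemma Mq_gt0 : (2 <= n)%N -> (0 < Mq F n)%N.
Proof.
move=> n_ge2; apply: leq_trans (Mqd_le_Mq (d := 1) _); last first.
  by rewrite leqnn -[1%N]/(2./2) half_leq.
have [W dimW] := exists_subsp_dim n_ge2.
apply: leq_trans (card_le_Mqd (Fam := [set W]) _ _); first by rewrite cards1.
  by rewrite sub1set inE dimW.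
by apply/forall_inP => X /set1P -> ; apply/forall_inP => Y /set1P ->; rewrite eqxx.
Qed.

Lemma card_equidistant_le_Mqd (U : {set S}) d :
  (0%VS : S) \in U -> equidistant U (2 * d) -> (#|U| <= Mqd F n d + 1)%N.
Proof.
move=> U0 eqU; rewrite (cardsD1 0%VS U) U0 addnC leq_add2r.
apply: card_le_Mqd.
  by apply/subsetP => X XU'; rewrite inE (equidistant_dim U0 eqU XU').
apply/forall_inP => X XU'; apply/forall_inP => Y YU'; apply/implyP => neXY.
by rewrite -(eqn_pmul2l (isT : 0 < 2)%N) -(equidistant_dist_cap U0 eqU XU' YU' neXY).
Qed.

Lemma equidistant_even (U : {set S}) r :
  (0%VS : S) \in U -> equidistant U r -> (2 < #|U|)%N ->
  exists2 d, (1 <= d <= n./2)%N & r = (2 * d)%N.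
Proof.
move=> U0 eqU; rewrite (cardsD1 0%VS U) U0 ltnS => /card_gt1P [X [Y [XU' YU' neXY]]].
have def_r := equidistant_dist_cap U0 eqU XU' YU' neXY.
exists (\dim (X :&: Y)) => //.
have X_gt0 : (0 < \dim X)%N by case/setD1P: XU' => X0 _; rewrite lt0n dimv_eq0.
have := dim_subsp_le X; rewrite (equidistant_dim U0 eqU XU') def_r in X_gt0 * => le_n.
apply/andP; split; first lia.
by rewrite -(half_double (\dim _)) -mul2n half_leq.
Qed.

End SubspaceCodes.

Theorem corollary2 (F : finFieldType) (n : nat) (hn : (2 <= n)%N)
    (U : {set subsp F n}) (hU : linear_code U) :
  (forall d : nat, (1 <= d <= n./2)%N -> equidistant U (2 * d) ->
     (#|U| <= 2 ^ trunc_log 2 (Mqd F n d + 1))%N) /\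
  ((exists r : nat, equidistant U r) ->
     (#|U| <= 2 ^ trunc_log 2 (Mq F n + 1))%N).
Proof.
have [k cardU] := linear_code_card_pow2 hU.
have U0 : (0%VS : subsp F n) \in U by case: hU.
rewrite cardU; split=> [d _ eqU | [r eqU]]; apply: pow2_le_trunc_log; rewrite -cardU.
  exact: card_equidistant_le_Mqd.
have [small | big] := leqP #|U| 2.
  by apply: leq_trans small _; rewrite addn1 ltnS Mq_gt0.
have [d d_range def_r] := equidistant_even U0 eqU big.
rewrite def_r in eqU.
by apply: leq_trans (card_equidistant_le_Mqd U0 eqU) _; rewrite leq_add2r Mqd_le_Mq.
Qed.
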